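(* Let $m>n\ge1$ be coprime integers, and let $$\mathcal{A}_{\frac{m}{n}}(q)=q\,\mathcal{N}_{\frac{m}{n}}(q)\mathcal{N}_{\frac{n}{m}}(q)+\mathcal{D}_{\frac{m}{n}}(q)\mathcal{D}_{\frac{n}{m}}(q),$$ $$\mathcal{B}_{\frac{m}{n}}(q)=\mathcal{N}_{\frac{m}{n}}(q)\mathcal{D}_{\frac{n}{m}}(q)-\mathcal{D}_{\frac{m}{n}}(q)\mathcal{N}_{\frac{n}{m}}(q),$$ $$\mathcal{C}_{\frac{m}{n}}(q)=q\,\mathcal{N}_{\frac{m}{n}}(q)^2+\mathcal{D}_{\frac{m}{n}}(q)^2.$$ Then (i) $\mathcal{A}_{\frac{m}{n}}$ and $\mathcal{B}_{\frac{m}{n}}$ are self-reciprocal, i.e. $q^{\deg P}P(q^{-1})=P(q)$ for $P\in\{\mathcal{A}_{\frac{m}{n}},\mathcal{B}_{\frac{m}{n}}\}$; (ii) $\mathcal{A}_{\frac{m}{n}},\mathcal{B}_{\frac{m}{n}},\mathcal{C}_{\frac{m}{n}}$ are monic (leading and lowest-degree coefficients equal to $1$) and have positive coefficients.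
   Context: The $q$-deformed rationals: $x\mapsto[x]_q$ is the unique map from $\mathbb{Q}\cup\{\infty\}$ to $\mathbb{Q}(q)\cup\{\infty\}$ satisfying $[0]_q=0$, $[x+1]_q=q[x]_q+1$ and $[-1/x]_q=-1/(q[x]_q)$. For positive rational $x$, $\mathcal{N}_x,\mathcal{D}_x\in\mathbb{Z}[q]$ are the numerator and denominator of $[x]_q$: the polynomials with no common divisor in $\mathbb{Z}[q]$ other than $\pm1$ and with positive leading coefficients such that $[x]_q=\mathcal{N}_x/\mathcal{D}_x$. *)

From HB Require Import structures.
From mathcomp Require Import all_boot all_order all_algebra.
Set Implicit Arguments. Unset Strict Implicit. Unset Printing Implicit Defensive.
Import Order.TTheory GRing.Theory Num.Theory.
Local Open Scope ring_scope.

(* q-deformed positive rationals, computed from the defining functional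
   equations [0]=0, [x+1] = q[x]+1, [-1/x] = -1/(q[x]).  These imply
   [1]_q = 1, [x+1]_q = (qN+D)/D and [x/(x+1)]_q = qN/(qN+D) when [x]_q=N/D.
   qpair_aux k m n returns a pair (N, D) of integer polynomials with
   [m/n]_q = N/D (for m, n > 0), by running the subtractive Euclid algorithm;
   k is fuel (m + n suffices). *)
Fixpoint qpair_aux (k m n : nat) : {poly int} * {poly int} :=
  match k with
  | 0%N => (1, 1)
  | k'.+1 =>
    if (m == 0%N) || (n == 0%N) || (m == n) then (1, 1)
    else if (n < m)%N then
      let: (N, D) := qpair_aux k' (m - n) n in ('X * N + D, D)
    else
      let: (N, D) := qpair_aux k' m (n - m) in ('X * N, 'X * N + D)
  end.

(* A representative fraction N/D of [m/n]_q (not a priori reduced). *)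
Definition qpair (m n : nat) : {poly int} * {poly int} := qpair_aux (m + n) m n.

Definition qrat_is (m n : nat) (N D : {poly int}) : Prop :=
  D != 0 /\ N * (qpair m n).2 = (qpair m n).1 * D.

Definition zdvd (d p : {poly int}) : Prop := exists r : {poly int}, p = r * d.

Definition zcoprime (p r : {poly int}) : Prop :=
  forall d : {poly int}, zdvd d p -> zdvd d r -> d = 1 \/ d = -1.

Definition is_num_den (m n : nat) (N D : {poly int}) : Prop :=
  [/\ qrat_is m n N D, zcoprime N D, 0 < lead_coef N & 0 < lead_coef D].

Definition self_reciprocal (P : {poly int}) : Prop :=
  P = \poly_(i < size P) P`_((size P).-1 - i).

Definition low_coef (P : {poly int}) : int := P`_(find (fun c : int => c != 0) P).

Definition monic2 (P : {poly int}) : Prop := lead_coef P = 1 /\ low_coef P = 1.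

Definition pos_coefs (P : {poly int}) : Prop := forall i : nat, (i < size P)%N -> 0 < P`_i.

From HB Require Import structures.
From mathcomp Require Import all_boot all_order all_algebra.
From mathcomp Require Import ring zify.
Import Order.TTheory GRing.Theory Num.Theory.
Local Open Scope ring_scope.

(* The pair (N, D) = qpair m n is built from (1, 1) by the subtractive
   Euclidean algorithm, through the steps (N, D) -> (qN + D, D) and
   (N, D) -> (qN, qN + D); the pair of n/m is built by the same run with the
   two steps interchanged.  Induction along the run shows that N and D have
   nonnegative coefficients, positive exactly in degrees a..k and 0..c with
   a <= c <= k and N_k = D_0 = 1; that the pair of n/m is
   (q^k D(1/q), q^k N(1/q)); and that u N + v D is a power of q for some u, v,
   so that N/D is already in lowest terms (D_0 = 1 excludes the factor q).
   The reciprocity makes A and B invariant under reversal in degrees 2k + 1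
   and 2k.  A, C and, after one more Euclid step, B are sums of products of
   polynomials whose positive coefficients fill overlapping intervals of
   degrees, so their coefficients are positive from degree 0 up to the top;
   the constant coefficients are 1. *)

Set Implicit Arguments.
Unset Strict Implicit.
Unset Printing Implicit Defensive.

Section Reciprocal.
Variable R : comNzRingType.
Implicit Types P Q : {poly R}.

Definition recip (d : nat) P := \poly_(i < d.+1) P`_(d - i).

Lemma coef_recip d P i : (recip d P)`_i = if (i <= d)%N then P`_(d - i) else 0.
Proof. by rewrite coef_poly ltnS. Qed.

Lemma recipD d : {morph recip d : P Q / P + Q}.
Proof.
move=> P Q; apply/polyP => i; rewrite !(coefD, coef_recip).
by case: ifP; rewrite ?addr0.
Qed.

Lemma recipZ d c P : recip d (c *: P) = c *: recip d P.
Proof.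
apply/polyP => i; rewrite !(coefZ, coef_recip).
by case: ifP; rewrite ?mulr0.
Qed.

HB.instance Definition _ d :=
  GRing.isSemilinear.Build R {poly R} {poly R} _ (recip d) (recipZ d, recipD d).

Lemma size_recip d P : (size (recip d P) <= d.+1)%N.
Proof. exact: size_poly. Qed.

Lemma recipK d P : (size P <= d.+1)%N -> recip d (recip d P) = P.
Proof.
move=> /leq_sizeP sP; apply/polyP => i; rewrite !coef_recip.
case: leqP => [i_le_d | d_lt_i]; last by rewrite sP.
by rewrite leq_subr subKn.
Qed.

Lemma recipXM d P : (size P <= d.+1)%N -> recip d.+1 ('X * P) = recip d P.
Proof.
move=> sP; apply/polyP => i; rewrite !coef_recip coefXM.
case: (leqP i d) => [i_le_d | d_lt_i].
  by rewrite leqW // ifF; [congr (_`_ _); lia | apply/eqP; lia].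
by case: ifP => // i_le_Sd; rewrite ifT //; apply/eqP; lia.
Qed.

Lemma recipS d P : (size P <= d.+1)%N -> recip d.+1 P = 'X * recip d P.
Proof.
move=> /leq_sizeP sP; apply/polyP => -[|i]; rewrite coefXM coef_recip //=.
by rewrite sP.
by rewrite coef_recip ltnS subSS.
Qed.

Lemma recip_addn n d P :
  (size P <= d.+1)%N -> recip (n + d) P = 'X^n * recip d P.
Proof.
move=> sP; elim: n => [|n IHn]; first by rewrite expr0 mul1r.
by rewrite addSn recipS ?IHn ?exprS ?mulrA // (leq_trans sP) // ltnS leq_addl.
Qed.

Lemma recipC d c : recip d c%:P = c *: 'X^d.
Proof.
apply/polyP => i; rewrite coef_recip coefZ coefXn coefC subn_eq0.
by case: (ltngtP i d); rewrite ?mulr0 ?mulr1.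
Qed.

Lemma recipM a b P Q : (size P <= a.+1)%N -> (size Q <= b.+1)%N ->
  recip (a + b) (P * Q) = recip a P * recip b Q.
Proof.
elim: a P => [|a IHa] P sP sQ.
  by rewrite [P]size1_polyC // mul_polyC linearZ recipC expr0 -scalerAl mul1r.
pose c := P`_0; pose P' := drop_poly 1 P.
have eP : P = 'X * P' + c%:P.
  rewrite -[LHS](poly_take_drop 1) addrC mulrC; congr (_ + _).
  by apply/polyP => -[|i]; rewrite coef_take_poly coefC.
have sP' : (size P' <= a.+1)%N by rewrite size_drop_poly; lia.
have sP'Q : (size (P' * Q)%R <= (a + b).+1)%N.
  by apply: (leq_trans (size_polyMleq _ _)); lia.
rewrite eP mulrDl -mulrA mul_polyC !raddfD /= linearZ /= addSn recipXM //.
rewrite IHa // -addSn recip_addn // recipXM // recipC -!mul_polyC; ring.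
Qed.

Lemma coef_recip_fixed d P : recip d P = P -> P`_d = P`_0.
Proof. by move=> fixP; rewrite -{1}fixP coef_recip leqnn subnn. Qed.

End Reciprocal.

Section CoefSupport.
Variable R : numDomainType.
Implicit Types P Q : {poly R}.

Definition coef_supp P (a b : nat) :=
  forall i, if (a <= i <= b)%N then 0 < P`_i else P`_i == 0.

Lemma coef_supp_gt0 P a b i : coef_supp P a b -> (a <= i <= b)%N -> 0 < P`_i.
Proof. by move=> /(_ i) /[swap] ->. Qed.

Lemma coef_supp_eq0 P a b i :
  coef_supp P a b -> ~~ (a <= i <= b)%N -> P`_i = 0.
Proof. by move=> /(_ i) /[swap] /negPf -> /eqP. Qed.

Lemma coef_supp_ge0 P a b i : coef_supp P a b -> 0 <= P`_i.
Proof. by move=> /(_ i); case: ifP => _ => [/ltW | /eqP ->]. Qed.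

Lemma size_coef_supp P a b : coef_supp P a b -> (a <= b)%N -> size P = b.+1.
Proof.
move=> sP le_ab; apply/eqP; rewrite eqn_leq; apply/andP; split.
  by apply/leq_sizeP => i lt_bi; apply: (coef_supp_eq0 sP); lia.
rewrite ltnNge; apply/negP => /leq_sizeP /(_ b (leqnn b)) Pb0.
suff : 0 < P`_b by rewrite Pb0 ltxx.
by apply: (coef_supp_gt0 sP); lia.
Qed.

Lemma coef_suppXM P a b : coef_supp P a b -> coef_supp ('X * P) a.+1 b.+1.
Proof. by move=> sP [|i]; rewrite coefXM //=; apply: sP. Qed.

Lemma coef_suppD P Q a b c d e f : coef_supp P a b -> coef_supp Q c d ->
  (a <= b)%N -> (c <= d)%N -> (c <= b.+1)%N -> (a <= d.+1)%N ->
  e = minn a c -> f = maxn b d -> coef_supp (P + Q) e f.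
Proof.
move=> sP sQ le_ab le_cd le_cSb le_aSd -> -> i; rewrite coefD.
have [iP|iP] := boolP (a <= i <= b)%N; have [iQ|iQ] := boolP (c <= i <= d)%N.
- rewrite ifT; last lia.
  by rewrite ltr_wpDr ?(coef_supp_ge0 _ sQ) ?(coef_supp_gt0 sP iP).
- by rewrite ifT ?(coef_supp_eq0 sQ iQ) ?addr0 ?(coef_supp_gt0 sP iP) //; lia.
- by rewrite ifT ?(coef_supp_eq0 sP iP) ?add0r ?(coef_supp_gt0 sQ iQ) //; lia.
- by rewrite ifF ?(coef_supp_eq0 sP iP) ?(coef_supp_eq0 sQ iQ) ?addr0 //; lia.
Qed.

Lemma coef_suppM P Q a b c d : coef_supp P a b -> coef_supp Q c d ->
  (a <= b)%N -> (c <= d)%N -> coef_supp (P * Q) (a + c) (b + d).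
Proof.
move=> sP sQ le_ab le_cd i; rewrite coefM.
have term_ge0 (j : 'I_i.+1) : 0 <= P`_j * Q`_(i - j).
  by rewrite mulr_ge0 ?(coef_supp_ge0 _ sP) ?(coef_supp_ge0 _ sQ).
case: ifP => [i_in | /negbT i_out].
  pose j := maxn a (i - d); have lt_ji : (j < i.+1)%N by lia.
  rewrite lt_def sumr_ge0 // andbT psumr_neq0 //; apply/hasP.
  exists (Ordinal lt_ji); first exact: mem_index_enum.
  by rewrite mulr_gt0 ?(coef_supp_gt0 sP) ?(coef_supp_gt0 sQ) //=; lia.
apply/eqP; rewrite big1 // => j _.
have [jP | jP] := boolP (a <= j <= b)%N.
  by rewrite (coef_supp_eq0 sQ) ?mulr0 //; have := ltn_ord j; lia.
by rewrite (coef_supp_eq0 sP jP) mul0r.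
Qed.

Lemma coef_supp_recip P a b d : coef_supp P a b -> (a <= b)%N -> (b <= d)%N ->
  coef_supp (recip d P) (d - b) (d - a).
Proof.
move=> sP le_ab le_bd i; rewrite coef_recip.
case: (leqP i d) => [le_id | lt_di]; last by rewrite ifF //; apply/negbTE; lia.
have -> : (d - b <= i <= d - a)%N = (a <= d - i <= b)%N.
  by apply/idP/idP; lia.
exact: sP.
Qed.

End CoefSupport.

Local Notation qfrac := ({poly int} * {poly int})%type.

Implicit Types (P : {poly int}) (p q : qfrac).

Lemma low_coef_coef0 P : P`_0 != 0 -> low_coef P = P`_0.
Proof. by rewrite /low_coef; case: (polyseq P) => //= c s ->. Qed.

Lemma coef_supp_pos_coefs P d : coef_supp P 0 d -> pos_coefs P.
Proof.
move=> sP i; rewrite (size_coef_supp sP) // ltnS => le_id.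
exact: (coef_supp_gt0 sP).
Qed.

Lemma coef_supp_monic2 P d :
  coef_supp P 0 d -> P`_0 = 1 -> P`_d = 1 -> monic2 P.
Proof.
move=> sP P0 Pd; split; last by rewrite low_coef_coef0 P0 ?oner_neq0.
by rewrite lead_coefE (size_coef_supp sP).
Qed.

Lemma palindrome_coef_supp P d :
    coef_supp P 0 d -> recip d P = P -> P`_0 = 1 ->
  [/\ self_reciprocal P, monic2 P & pos_coefs P].
Proof.
move=> sP fixP P0; split; last exact: coef_supp_pos_coefs sP.
  by rewrite /self_reciprocal (size_coef_supp sP (leq0n d)) -{1}fixP.
by apply: (coef_supp_monic2 sP P0); rewrite (coef_recip_fixed fixP).
Qed.

Definition qsucc p := ('X * p.1 + p.2, p.2).
Definition qdiv_succ p := ('X * p.1, 'X * p.1 + p.2).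

Lemma qpair_aux_gt f m n : (0 < n < m)%N ->
  qpair_aux f.+1 m n = qsucc (qpair_aux f (m - n) n).
Proof.
move=> /andP[n_gt0 lt_nm] /=.
have -> : (m == 0%N) || (n == 0%N) || (m == n) = false by apply/negbTE; lia.
by rewrite lt_nm; case: qpair_aux.
Qed.

Lemma qpair_aux_lt f m n : (0 < m < n)%N ->
  qpair_aux f.+1 m n = qdiv_succ (qpair_aux f m (n - m)).
Proof.
move=> /andP[m_gt0 lt_mn] /=.
have -> : (m == 0%N) || (n == 0%N) || (m == n) = false by apply/negbTE; lia.
by rewrite ltnNge (ltnW lt_mn) /=; case: qpair_aux.
Qed.

Lemma qpair_aux_ind (Q : qfrac -> qfrac -> Prop) :
    Q (1, 1) (1, 1) ->
    (forall p q, Q p q -> Q (qsucc p) (qdiv_succ q)) ->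
    (forall p q, Q p q -> Q (qdiv_succ p) (qsucc q)) ->
  forall f m n, Q (qpair_aux f m n) (qpair_aux f n m).
Proof.
move=> Q11 Qsucc Qdiv_succ; elim=> [|f IHf] m n //.
have [-> | m_gt0] := posnP m; first by rewrite /= ?eqxx ?orbT.
have [-> | n_gt0] := posnP n; first by rewrite /= ?eqxx ?orbT.
case: (ltngtP n m) => [lt_nm | lt_mn | ->]; last by rewrite /= ?eqxx ?orbT.
  by rewrite qpair_aux_gt ?qpair_aux_lt ?n_gt0 //; apply: Qsucc.
by rewrite qpair_aux_lt ?qpair_aux_gt ?m_gt0 //; apply: Qdiv_succ.
Qed.

Definition qflip k p := (recip k p.2, recip k p.1).

Lemma qflip_qsucc k p : (size p.1 <= k.+1)%N -> (size p.2 <= k.+1)%N ->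
  qflip k.+1 (qsucc p) = qdiv_succ (qflip k p).
Proof.
by move=> s1 s2; rewrite /qflip /= raddfD /= recipXM // recipS // addrC.
Qed.

Lemma qflip_qdiv_succ k p : (size p.1 <= k.+1)%N -> (size p.2 <= k.+1)%N ->
  qflip k.+1 (qdiv_succ p) = qsucc (qflip k p).
Proof.
by move=> s1 s2; rewrite /qflip /= raddfD /= recipXM // recipS // addrC.
Qed.

Definition qshape p (a c k : nat) :=
  [/\ (a <= c <= k)%N, coef_supp p.1 a k, coef_supp p.2 0 c,
      p.1`_k = 1 & p.2`_0 = 1].

Lemma size_qshape p a c k : qshape p a c k ->
  size p.1 = k.+1 /\ (size p.2 <= k.+1)%N.
Proof.
case=> le_ack s1 s2 _ _.
by rewrite (size_coef_supp s1) ?(size_coef_supp s2) //; lia.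
Qed.

Lemma qshape_qsucc p a c k : qshape p a c k -> qshape (qsucc p) 0 c k.+1.
Proof.
case=> le_ack s1 s2 top bot; split => //=; first lia.
  by apply: (coef_suppD (coef_suppXM s1) s2); lia.
by rewrite coefD coefXM top (coef_supp_eq0 s2) ?addr0 //; lia.
Qed.

Lemma qshape_qdiv_succ p a c k :
  qshape p a c k -> qshape (qdiv_succ p) a.+1 k.+1 k.+1.
Proof.
case=> le_ack s1 s2 top bot; split => //=; first lia.
- exact: coef_suppXM.
- by apply: (coef_suppD (coef_suppXM s1) s2); lia.
- by rewrite coefXM.
- by rewrite coefD coefXM add0r.
Qed.

Definition qdual p q := exists a c k, qshape p a c k /\ q = qflip k p.

Lemma qdual_qpair_aux f m n : qdual (qpair_aux f m n) (qpair_aux f n m).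
Proof.
apply: qpair_aux_ind => [|p _ [a [c [k [sh ->]]]] |p _ [a [c [k [sh ->]]]]].
- exists 0%N, 0%N, 0%N; split; last by rewrite /qflip /= -polyC1 recipC scale1r.
  have supp1 : coef_supp (1 : {poly int}) 0 0 by case=> [|i]; rewrite coef1.
  by split; rewrite ?coef1.
- have [s1 s2] := size_qshape sh.
  exists 0%N, c, k.+1; rewrite qflip_qsucc ?s1 //; split => //.
  exact: qshape_qsucc sh.
- have [s1 s2] := size_qshape sh.
  exists a.+1, k.+1, k.+1; rewrite qflip_qdiv_succ ?s1 //; split => //.
  exact: qshape_qdiv_succ sh.
Qed.

Definition Xpow_bezout p := exists u v j, u * p.1 + v * p.2 = 'X^j.

Lemma Xpow_bezout_qsucc p : Xpow_bezout p -> Xpow_bezout (qsucc p).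
Proof.
case=> u [v [j bez]]; exists u, ('X * v - u), j.+1.
by rewrite exprS -bez /=; ring.
Qed.

Lemma Xpow_bezout_qdiv_succ p : Xpow_bezout p -> Xpow_bezout (qdiv_succ p).
Proof.
case=> u [v [j bez]]; exists (u - 'X * v), ('X * v), j.+1.
by rewrite exprS -bez /=; ring.
Qed.

Lemma Xpow_bezout_qpair_aux f m n : Xpow_bezout (qpair_aux f m n).
Proof.
suff [] : Xpow_bezout (qpair_aux f m n) /\ Xpow_bezout (qpair_aux f n m) by [].
apply: (@qpair_aux_ind (fun p q => Xpow_bezout p /\ Xpow_bezout q)).
- by split; exists 1, 0, 0%N; rewrite expr0 mulr1 mul0r addr0.
- move=> p q [bp bq].
  by split; [apply: Xpow_bezout_qsucc | apply: Xpow_bezout_qdiv_succ].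
- move=> p q [bp bq].
  by split; [apply: Xpow_bezout_qdiv_succ | apply: Xpow_bezout_qsucc].
Qed.

Lemma Xn_factor (R : idomainType) (D P s : {poly R}) j :
  D`_0 != 0 -> 'X^j * P = D * s -> exists s', s = 'X^j * s'.
Proof.
elim: j P s => [|j IHj] P s D0 eqDs; first by exists s; rewrite expr0 mul1r.
have /factor_theorem [s1 es] : root s 0.
  move/(congr1 (coefp 0)): eqDs; rewrite /= coefXnM coef0M /= => /esym/eqP.
  by rewrite mulf_eq0 (negPf D0) /root horner_coef0.
rewrite polyC0 subr0 in es.
have X_neq0 : 'X != 0 :> {poly R} by rewrite polyX_eq0.
have [s' es1] : exists s', s1 = 'X^j * s'.
  apply: (IHj P _ D0); apply: (mulIf X_neq0).
  by rewrite mulrAC -exprSr eqDs es mulrA.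
by exists s'; rewrite es es1 exprSr mulrAC.
Qed.

Lemma coprime_fraction_eq N D N1 D1 :
    Xpow_bezout (N, D) -> D`_0 = 1 -> 0 < lead_coef D ->
    N1 * D = N * D1 -> zcoprime N1 D1 -> 0 < lead_coef D1 ->
  N1 = N /\ D1 = D.
Proof.
move=> [u [v [j /= bez]]] D0 lead_D eqND cop lead_D1.
have eqN : 'X^j * N1 = N * (u * N1 + v * D1).
  rewrite -bez; transitivity (u * N * N1 + v * (N1 * D)); first ring.
  by rewrite eqND; ring.
have eqD : 'X^j * D1 = D * (u * N1 + v * D1).
  rewrite -bez; transitivity (u * (N1 * D) + v * D * D1); last ring.
  by rewrite eqND; ring.
have [s es] : exists s, u * N1 + v * D1 = 'X^j * s.
  by apply: Xn_factor eqD; rewrite D0 oner_neq0.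
have Xj_neq0 : 'X^j != 0 :> {poly int} by rewrite expf_neq0 ?polyX_eq0.
move: eqN eqD; rewrite es [N * _]mulrCA [D * _]mulrCA.
move=> /(mulfI Xj_neq0) eN /(mulfI Xj_neq0) eD.
have [s1|sN1] := cop s (ex_intro _ N eN) (ex_intro _ D eD).
  by rewrite eN eD s1 !mulr1.
by move: lead_D1; rewrite eD sN1 mulrN1 lead_coefN oppr_gt0 ltNge ltW.
Qed.

Lemma is_num_den_qpair m n N D : is_num_den m n N D ->
  N = (qpair m n).1 /\ D = (qpair m n).2.
Proof.
case=> [[_ eqND] cop _ lead_D].
have [a [c [k [[le_ack _ s2 _ bot] _]]]] := qdual_qpair_aux (m + n) m n.
apply: coprime_fraction_eq (Xpow_bezout_qpair_aux _ _ _) bot _ eqND cop lead_D.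
by rewrite lead_coefE (size_coef_supp s2) //; apply: (coef_supp_gt0 s2); lia.
Qed.

Lemma qpair_gt m n : (0 < n)%N -> (n < m)%N -> exists p q,
  [/\ qdual p q, qpair m n = qsucc p & qpair n m = qdiv_succ q].
Proof.
move=> n_gt0 lt_nm; rewrite /qpair [(n + m)%N]addnC.
have -> : (m + n = (m + n).-1.+1)%N by lia.
exists (qpair_aux (m + n).-1 (m - n) n), (qpair_aux (m + n).-1 n (m - n)).
rewrite qpair_aux_gt ?qpair_aux_lt ?n_gt0 ?lt_nm //.
by split => //; apply: qdual_qpair_aux.
Qed.

(* At q = 1 these are the Pythagorean triple 2mn, m^2 - n^2, m^2 + n^2. *)
Definition qpythA p q := 'X * p.1 * q.1 + p.2 * q.2.
Definition qpythB p q := p.1 * q.2 - p.2 * q.1.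
Definition qpythC p := 'X * p.1 ^+ 2 + p.2 ^+ 2.

Lemma recip_qpythA k p : (size p.1 <= k.+1)%N -> (size p.2 <= k.+1)%N ->
  recip (k.+1 + k) (qpythA p (qflip k p)) = qpythA p (qflip k p).
Proof.
move=> s1 s2; have sX1 : (size ('X * p.1)%R <= k.+2)%N.
  by apply: (leq_trans (size_polyMleq _ _)); rewrite size_polyX; lia.
rewrite /qpythA /qflip /= raddfD /= !recipM ?size_recip ?(leqW s2) //.
by rewrite recipXM // recipS // !recipK //; ring.
Qed.

Lemma recip_qpythB k p : (size p.1 <= k.+1)%N -> (size p.2 <= k.+1)%N ->
  recip (k + k) (qpythB p (qflip k p)) = qpythB p (qflip k p).
Proof.
move=> s1 s2; rewrite /qpythB /qflip /= raddfB /= !recipM ?size_recip //.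
by rewrite !recipK //; ring.
Qed.

Lemma qpythB_qsucc p q : qpythB (qsucc p) (qdiv_succ q) =
  'X * ('X * (p.1 * q.1) + p.1 * q.2) + p.2 * q.2.
Proof. by rewrite /qpythB /=; ring. Qed.

Section QShapePythagorean.
Variables (p : qfrac) (a c k : nat).
Hypothesis sh : qshape p a c k.

Lemma coef_supp_qpythA : coef_supp (qpythA p (qflip k p)) 0 (k.+1 + k).
Proof.
case: sh => le_ack s1 s2 _ _.
apply: (coef_suppD (coef_suppM (coef_suppXM s1) (coef_supp_recip s2 _ _) _ _)
                   (coef_suppM s2 (coef_supp_recip s1 _ _) _ _)); lia.
Qed.

Lemma coef0_qpythA : (qpythA p (qflip k p))`_0 = 1.
Proof.
case: sh => _ _ _ top bot.
by rewrite coefD -mulrA coefXM add0r coef0M coef_recip subn0 top bot mulr1.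
Qed.

Lemma coef_supp_qpythB :
  coef_supp (qpythB (qsucc p) (qflip k.+1 (qsucc p))) 0 (k.+1 + k.+1).
Proof.
have [size1 size2] := size_qshape sh.
case: sh => le_ack s1 s2 _ _.
rewrite qflip_qsucc ?size1 // qpythB_qsucc /qflip /=.
have r1 := coef_supp_recip s1; have r2 := coef_supp_recip s2.
have s3 : coef_supp ('X * (p.1 * recip k p.2) + p.1 * recip k p.1)
                    a (k.+1 + k).
  apply: (coef_suppD (coef_suppXM (coef_suppM s1 (r2 k _ _) _ _))
                     (coef_suppM s1 (r1 k _ _) _ _)); lia.
by apply: (coef_suppD (coef_suppXM s3) (coef_suppM s2 (r1 k _ _) _ _)); lia.
Qed.

Lemma coef0_qpythB : (qpythB (qsucc p) (qflip k.+1 (qsucc p)))`_0 = 1.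
Proof.
have [size1 size2] := size_qshape sh.
case: sh => _ _ _ top bot.
rewrite qflip_qsucc ?size1 // qpythB_qsucc /qflip /=.
by rewrite coefD coefXM add0r coef0M coef_recip subn0 top bot mulr1.
Qed.

Lemma coef_supp_qpythC : coef_supp (qpythC p) 0 (k.+1 + k).
Proof.
case: sh => le_ack s1 s2 _ _; rewrite /qpythC !expr2.
apply: (coef_suppD (coef_suppXM (coef_suppM s1 s1 _ _))
                   (coef_suppM s2 s2 _ _)); lia.
Qed.

Lemma coef0_qpythC : (qpythC p)`_0 = 1.
Proof.
case: sh => _ _ _ _ bot.
by rewrite coefD coefXM add0r expr2 coef0M bot mulr1.
Qed.

Lemma coef_top_qpythC : (qpythC p)`_(k.+1 + k) = 1.
Proof.
case: sh => le_ack s1 s2 top _.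
have s11 : coef_supp (p.1 * p.1) (a + a) (k + k).
  by apply: (coef_suppM s1 s1); lia.
have s22 : coef_supp (p.2 * p.2) (0 + 0) (c + c).
  by apply: (coef_suppM s2 s2); lia.
rewrite /qpythC !expr2 coefD coefXM addSn /=.
rewrite (coef_supp_eq0 s22) ?addr0; last lia.
have -> : (p.1 * p.1)`_(k + k) = lead_coef (p.1 * p.1).
  by rewrite lead_coefE (size_coef_supp s11) //; lia.
by rewrite lead_coefM lead_coefE (size_coef_supp s1) ?top ?mulr1 //; lia.
Qed.

End QShapePythagorean.

Theorem proposition2 (m n : nat) (N1 D1 N2 D2 : {poly int}) :
  (1 <= n)%N -> (n < m)%N -> coprime m n ->
  is_num_den m n N1 D1 -> is_num_den n m N2 D2 ->
  let A := 'X * N1 * N2 + D1 * D2 in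
  let B := N1 * D2 - D1 * N2 in
  let C := 'X * N1 ^+ 2 + D1 ^+ 2 in
  (self_reciprocal A /\ self_reciprocal B) /\
  (monic2 A /\ monic2 B /\ monic2 C /\ pos_coefs A /\ pos_coefs B /\ pos_coefs C).
Proof.
move=> n_gt0 lt_nm _ /is_num_den_qpair qmn /is_num_den_qpair qnm.
have [p0 [_ [[a [c [k [sh0 ->]]]] Emn Enm]]] := qpair_gt n_gt0 lt_nm.
have [size01 size02] := size_qshape sh0.
move: qmn qnm; rewrite Emn Enm -qflip_qsucc ?size01 // => -[-> ->] [-> ->].
have sh := qshape_qsucc sh0; have [size1 size2] := size_qshape sh.
have [symA monA posA] := palindrome_coef_supp (coef_supp_qpythA sh)
  (recip_qpythA (eq_leq size1) size2) (coef0_qpythA sh).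
have [symB monB posB] := palindrome_coef_supp (coef_supp_qpythB sh0)
  (recip_qpythB (eq_leq size1) size2) (coef0_qpythB sh0).
have monC := coef_supp_monic2 (coef_supp_qpythC sh) (coef0_qpythC sh)
  (coef_top_qpythC sh).
have posC := coef_supp_pos_coefs (coef_supp_qpythC sh).
by split; [split | do ?[split; first done]].
Qed.
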